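(* Let $0<A_1<A_2<\infty$, $f_1=f(\cdot;A_1)$, $f_2=f(\cdot;A_2)$, and let $\Xi\in(0,\infty)$ be such that $f_1(\xi)>0$, $f_1'(\xi)<0$ and $f_2'(\xi)<0$ for all $\xi\in(0,\Xi)$. Then $f_1(\xi)<f_2(\xi)$ for all $\xi\in(0,\Xi)$.
   Context: Let $N\geq1$, $m>1$, $\sigma>0$, $p>m$, $L=\sigma(m-1)+2(p-1)$, $\alpha=(\sigma+2)/L$, $\beta=(p-m)/L$. For $A>0$, $f(\cdot;A)$ denotes the unique solution of $$(f^m)''+\frac{N-1}{\xi}(f^m)'+\alpha f+\beta\xi f'-\xi^{\sigma}f^p=0,\qquad f(0)=A,\ f'(0)=0,$$ positive on a maximal interval $[0,\xi_{\max}(A))$ with $f^m\in C^2$ there. *)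

From Stdlib Require Import Reals.
From Coquelicot Require Import Coquelicot.
Open Scope R_scope.

Definition Lpar (m sigma p : R) : R := sigma * (m - 1) + 2 * (p - 1).
Definition alpha (m sigma p : R) : R := (sigma + 2) / Lpar m sigma p.
Definition beta (m sigma p : R) : R := (p - m) / Lpar m sigma p.

Definition std_params (N : nat) (m sigma p : R) : Prop :=
  (1 <= N)%nat /\ 1 < m /\ 0 < sigma /\ m < p.

Definition fm (m : R) (f : R -> R) : R -> R := fun x => Rpower (f x) m.

Definition ode_residual (N : nat) (m sigma p : R) (f : R -> R) (xi : R) : R :=
  Derive_n (fm m f) 2 xi
  + (INR N - 1) / xi * Derive (fm m f) xi
  + alpha m sigma p * f xi
  + beta m sigma p * xi * Derive f xi
  - Rpower xi sigma * Rpower (f xi) p.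

(* [is_sol_on N m sigma p A f X]: f solves the initial value problem
   (f^m)'' + (N-1)/xi (f^m)' + alpha f + beta xi f' - xi^sigma f^p = 0,
   f(0) = A, f'(0) = 0, on the interval [0, X), is positive there, and
   f^m is C^2 on [0, X) (derivatives at 0 understood one-sidedly). *)
Definition is_sol_on (N : nat) (m sigma p A : R) (f : R -> R) (X : R) : Prop :=
  f 0 = A /\
  (forall xi, 0 <= xi < X -> 0 < f xi) /\
  filterlim f (at_right 0) (locally A) /\
  filterlim (fun h => (f h - f 0) / h) (at_right 0) (locally 0) /\
  (forall xi, 0 < xi < X ->
     ex_derive f xi /\ ex_derive (fm m f) xi /\
     ex_derive (Derive (fm m f)) xi /\
     continuous (Derive_n (fm m f) 2) xi) /\
  filterlim (Derive (fm m f)) (at_right 0) (locally 0) /\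
  (exists l, filterlim (Derive_n (fm m f) 2) (at_right 0) (locally l)) /\
  (forall xi, 0 < xi < X -> ode_residual N m sigma p f xi = 0).

From Stdlib Require Import Reals Lra Lia Classical.
From Coquelicot Require Import Coquelicot.
Open Scope R_scope.

(* Suppose f1 xi >= f2 xi.  For nu > 1 the rescaled profile g_nu = nu f1(nu^(-(m-1)/2) .) is a
   strict supersolution, g_nu increases with nu, and g_nu > f2 on [0, xi] for nu large.
   Lowering nu to the first value where g_nu touches f2 on [0, xi] gives nu >= A2/A1 (the
   value at which g_nu starts from A2) and a touching point c.  The point c = xi is excluded
   since g_nu > f1 >= f2 there; an interior c is excluded by the maximum principle (the residual
   of g_nu at c would dominate that of f2 = 0); and c = 0 forces nu = A2/A1, where both start
   from A2 and a double integration of the equation for g_nu^m - f2^m from 0 shows that this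
   difference would be negative near 0. *)

Lemma Rpower_pos x a : 0 < Rpower x a.
Proof. apply exp_pos. Qed.

Lemma Rpower_gt_1 x a : 1 < x -> 0 < a -> 1 < Rpower x a.
Proof. intros Hx Ha. rewrite <- (Rpower_O x) at 1 by lra. apply Rpower_lt; lra. Qed.

Lemma Rpower_le_1 x a : 0 < x <= 1 -> 0 <= a -> Rpower x a <= 1.
Proof.
  intros Hx Ha. apply Rle_trans with (Rpower 1 a).
  - apply Rle_Rpower_l; lra.
  - right. unfold Rpower. rewrite ln_1, Rmult_0_r. apply exp_0.
Qed.

Lemma Rpower_le_self x a : 0 < x <= 1 -> 1 <= a -> Rpower x a <= x.
Proof.
  intros Hx Ha. replace a with (1 + (a - 1)) by ring. rewrite Rpower_plus, Rpower_1 by lra.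
  pose proof (Rpower_le_1 x (a - 1) Hx ltac:(lra)). pose proof (Rpower_pos x (a - 1)). nra.
Qed.

Lemma Rpower_plus_INR t n a : 0 < t -> Rpower t (INR n + a) = t ^ n * Rpower t a.
Proof. intros Ht. rewrite Rpower_plus, Rpower_pow by lra. reflexivity. Qed.

Lemma is_derive_Rpower a t : 0 < t -> is_derive (fun x => Rpower x a) t (a * Rpower t (a - 1)).
Proof. intros Ht. apply is_derive_Reals. apply derivable_pt_lim_power. exact Ht. Qed.

Lemma Rpower_sub_MVT a x y : 0 < y < x ->
  exists c, y < c < x /\ Rpower x a - Rpower y a = a * Rpower c (a - 1) * (x - y).
Proof.
  intros H.
  destruct (MVT_cor2 (fun t => Rpower t a) (fun t => a * Rpower t (a - 1)) y x)
    as [z [Hz1 Hz2]]; [lra| |].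
  { intros z Hz. apply derivable_pt_lim_power. lra. }
  exists z. split; [lra|]. rewrite Hz1. ring.
Qed.

Lemma Rpower_sub_ge a x y : 1 <= a -> 0 < y <= x ->
  a * Rpower y (a - 1) * (x - y) <= Rpower x a - Rpower y a.
Proof.
  intros Ha Hy. destruct (Req_dec x y) as [->|Hne]; [rewrite !Rminus_diag; lra|].
  destruct (Rpower_sub_MVT a x y) as [c [Hc ->]]; [lra|].
  apply Rmult_le_compat_r; [lra|]. apply Rmult_le_compat_l; [lra|].
  apply Rle_Rpower_l; lra.
Qed.

Lemma Rpower_sub_le a x y : 1 <= a -> 0 < y <= x ->
  Rpower x a - Rpower y a <= a * Rpower x (a - 1) * (x - y).
Proof.
  intros Ha Hy. destruct (Req_dec x y) as [->|Hne]; [rewrite !Rminus_diag; lra|].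
  destruct (Rpower_sub_MVT a x y) as [c [Hc ->]]; [lra|].
  apply Rmult_le_compat_r; [lra|]. apply Rmult_le_compat_l; [lra|].
  apply Rle_Rpower_l; lra.
Qed.

Lemma pow_le_1 t n : 0 < t <= 1 -> 0 < t ^ n <= 1.
Proof. intros Ht. split; [apply pow_lt; lra|]. rewrite <- (pow1 n). apply pow_incr. lra. Qed.

(** * Limits at 0 from the right *)

(* An epsilon-delta form of [filterlim h (at_right 0) (locally 0)], convenient for
   combining with bounds that only hold on a right neighbourhood of 0. *)
Definition vanishes_at_0 (h : R -> R) : Prop :=
  forall e, 0 < e -> exists d, 0 < d /\ forall x, 0 < x < d -> Rabs (h x) < e.

Lemma vanishes_at_0_filterlim (f : R -> R) l :
  filterlim f (at_right 0) (locally l) -> vanishes_at_0 (fun x => f x - l).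
Proof.
  intros H e He.
  assert (Hl : locally l (fun y => Rabs (y - l) < e)) by (exists (mkposreal e He); auto).
  destruct (H _ Hl) as [d Hd].
  exists d. split; [apply cond_pos|]. intros x [Hx1 Hx2]. apply Hd; [|exact Hx1].
  change (Rabs (x - 0) < d). rewrite Rminus_0_r, Rabs_right; lra.
Qed.

Lemma vanishes_at_0_le (h1 h2 : R -> R) : vanishes_at_0 h2 ->
  (exists d, 0 < d /\ forall x, 0 < x < d -> Rabs (h1 x) <= Rabs (h2 x)) ->
  vanishes_at_0 h1.
Proof.
  intros H [d0 [Hd0 Hb]] e He. destruct (H e He) as [d [Hd H']].
  exists (Rmin d d0). split; [apply Rmin_pos; lra|]. intros x Hx.
  pose proof (Rmin_l d d0). pose proof (Rmin_r d d0).
  eapply Rle_lt_trans; [apply Hb|apply H']; lra.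
Qed.

Lemma vanishes_at_0_ext (h1 h2 : R -> R) : vanishes_at_0 h2 ->
  (exists d, 0 < d /\ forall x, 0 < x < d -> h1 x = h2 x) -> vanishes_at_0 h1.
Proof.
  intros H [d [Hd Heq]]. apply (vanishes_at_0_le _ _ H).
  exists d. split; [exact Hd|]. intros x Hx. rewrite Heq by exact Hx. lra.
Qed.

Lemma vanishes_at_0_plus (h1 h2 : R -> R) :
  vanishes_at_0 h1 -> vanishes_at_0 h2 -> vanishes_at_0 (fun x => h1 x + h2 x).
Proof.
  intros H1 H2 e He. destruct (H1 (e/2)) as [d1 [Hd1 H1']]; [lra|].
  destruct (H2 (e/2)) as [d2 [Hd2 H2']]; [lra|].
  exists (Rmin d1 d2). split; [apply Rmin_pos; lra|]. intros x Hx.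
  pose proof (Rmin_l d1 d2). pose proof (Rmin_r d1 d2).
  eapply Rle_lt_trans; [apply Rabs_triang|].
  assert (Rabs (h1 x) < e/2) by (apply H1'; lra).
  assert (Rabs (h2 x) < e/2) by (apply H2'; lra). lra.
Qed.

Lemma vanishes_at_0_scal (h : R -> R) c : vanishes_at_0 h -> vanishes_at_0 (fun x => c * h x).
Proof.
  intros H e He. pose proof (Rabs_pos c).
  destruct (H (e / (Rabs c + 1))) as [d [Hd H']]; [apply Rdiv_lt_0_compat; lra|].
  exists d. split; [lra|]. intros x Hx. rewrite Rabs_mult. specialize (H' x Hx).
  apply Rle_lt_trans with ((Rabs c + 1) * Rabs (h x)); [pose proof (Rabs_pos (h x)); nra|].
  replace e with ((Rabs c + 1) * (e / (Rabs c + 1))) by (field; lra).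
  apply Rmult_lt_compat_l; lra.
Qed.

Lemma vanishes_at_0_minus (h1 h2 : R -> R) :
  vanishes_at_0 h1 -> vanishes_at_0 h2 -> vanishes_at_0 (fun x => h1 x - h2 x).
Proof.
  intros H1 H2. apply (vanishes_at_0_ext _ (fun x => h1 x + (-1) * h2 x)).
  - apply vanishes_at_0_plus; [|apply vanishes_at_0_scal]; assumption.
  - exists 1. split; [lra|]. intros x _. ring.
Qed.

Lemma vanishes_at_0_abs (h : R -> R) : vanishes_at_0 h -> vanishes_at_0 (fun x => Rabs (h x)).
Proof.
  intros H. apply (vanishes_at_0_le _ h H).
  exists 1. split; [lra|]. intros. rewrite Rabs_Rabsolu. lra.
Qed.

Lemma vanishes_at_0_comp_scal (h : R -> R) s :
  0 < s -> vanishes_at_0 h -> vanishes_at_0 (fun t => h (s * t)).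
Proof.
  intros Hs H e He. destruct (H e He) as [d [Hd H']]. exists (d / s).
  split; [apply Rdiv_lt_0_compat; lra|].
  intros x [Hx Hxd]. apply H'. split; [nra|].
  apply (Rmult_lt_compat_l s) in Hxd; [|lra].
  replace (s * (d / s)) with d in Hxd by (field; lra). lra.
Qed.

Lemma vanishes_at_0_id : vanishes_at_0 (fun x => x).
Proof. intros e He. exists e. split; auto. intros x Hx. rewrite Rabs_right; lra. Qed.

Lemma vanishes_at_0_Rpower a : 1 <= a -> vanishes_at_0 (fun x => Rpower x a).
Proof.
  intros Ha. apply (vanishes_at_0_le _ _ vanishes_at_0_id).
  exists 1. split; [lra|]. intros x Hx. pose proof (Rpower_pos x a).
  rewrite !Rabs_right by lra. apply Rpower_le_self; lra.
Qed.

Lemma vanishes_at_0_pow n : vanishes_at_0 (fun x => x ^ S n).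
Proof.
  apply (vanishes_at_0_le _ _ vanishes_at_0_id).
  exists 1. split; [lra|]. intros x Hx. pose proof (pow_le_1 x n ltac:(lra)).
  rewrite !Rabs_right by (try apply Rle_ge, pow_le; lra). simpl. nra.
Qed.

Lemma Derive_eq_0_at_min (h : R -> R) a b c :
  a < c < b -> (forall x, a < x < b -> h c <= h x) -> ex_derive h c -> Derive h c = 0.
Proof.
  intros Hc Hm He. pose proof (ex_derive_Reals_0 _ _ He) as pr.
  rewrite <- (Derive_Reals _ _ pr). apply (deriv_minimum h a b c pr); try lra.
  intros; apply Hm; lra.
Qed.

Lemma Derive2_ge_0_at_min (h : R -> R) a b c :
  a < c < b -> (forall x, a < x < b -> h c <= h x) ->
  (forall x, a < x < b -> ex_derive h x) -> ex_derive (Derive h) c ->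
  0 <= Derive (Derive h) c.
Proof.
  intros Hc Hm He H2.
  assert (H0 : Derive h c = 0) by (apply (Derive_eq_0_at_min h a b c); auto).
  destruct (Rle_or_lt 0 (Derive (Derive h) c)) as [|Hd]; [assumption|exfalso].
  set (d := Derive (Derive h) c) in *.
  assert (Hl : derivable_pt_lim (Derive h) c d).
  { apply is_derive_Reals. apply Derive_correct. exact H2. }
  destruct (Hl (- d / 2)) as [del Hdel]; [lra|].
  set (t := Rmin (del / 2) ((b - c) / 2)).
  assert (Ht : 0 < t) by (unfold t; apply Rmin_pos; pose proof (cond_pos del); lra).
  assert (Ht1 : t <= del / 2) by apply Rmin_l.
  assert (Ht2 : t <= (b - c) / 2) by apply Rmin_r.
  destruct (MVT_cor2 h (Derive h) c (c + t)) as [z [Hz1 Hz2]]; [lra| |].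
  { intros z Hz. apply is_derive_Reals. apply Derive_correct. apply He. lra. }
  (* [Derive h] vanishes at [c] and decreases there, so [h] decreases right of [c]. *)
  assert (Hneg : Derive h z < 0).
  { assert (Hzc : Rabs (z - c) < del) by (rewrite Rabs_right; lra).
    specialize (Hdel (z - c) ltac:(lra) Hzc).
    replace (c + (z - c)) with z in Hdel by ring. rewrite H0, Rminus_0_r in Hdel.
    apply Rabs_def2 in Hdel. destruct Hdel as [Hd1 _].
    assert (Hq : Derive h z / (z - c) < 0) by lra.
    destruct (Rle_or_lt 0 (Derive h z)) as [Hz|]; [exfalso|assumption].
    assert (0 <= Derive h z / (z - c))
      by (apply Rmult_le_pos; [lra|left; apply Rinv_0_lt_compat; lra]).
    lra. }
  assert (h (c + t) - h c < 0) by (rewrite Hz1; apply Rmult_neg_pos; lra).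
  specialize (Hm (c + t) ltac:(lra)). lra.
Qed.

Lemma le_of_Derive_le_from_0 (F P F' P' : R -> R) eps :
  (forall x, 0 < x <= eps -> is_derive F x (F' x)) ->
  (forall x, 0 < x <= eps -> is_derive P x (P' x)) ->
  (forall x, 0 < x <= eps -> F' x <= P' x) ->
  vanishes_at_0 (fun x => F x - P x) ->
  forall x, 0 < x <= eps -> F x <= P x.
Proof.
  intros HF HP Hle Hlim x Hx.
  destruct (Rle_or_lt (F x) (P x)) as [|Hc]; [assumption|exfalso].
  destruct (Hlim (F x - P x)) as [d [Hd Hd']]; [lra|].
  set (y := Rmin (d / 2) (x / 2)).
  assert (0 < y) by (unfold y; apply Rmin_pos; lra).
  assert (y <= d / 2) by apply Rmin_l. assert (y <= x / 2) by apply Rmin_r.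
  destruct (MVT_cor2 (fun t => F t - P t) (fun t => F' t - P' t) y x) as [z [Hz1 Hz2]]; [lra| |].
  { intros z Hz. apply derivable_pt_lim_minus; apply is_derive_Reals; [apply HF|apply HP]; lra. }
  assert ((F' z - P' z) * (x - y) <= 0).
  { apply Rmult_le_0_r; [|lra]. assert (F' z <= P' z) by (apply Hle; lra). lra. }
  assert (Hy : Rabs (F y - P y) < F x - P x) by (apply Hd'; lra).
  apply Rabs_def2 in Hy. lra.
Qed.

Lemma decreasing_of_Derive_neg (f : R -> R) a b :
  (forall x, a < x < b -> ex_derive f x /\ Derive f x < 0) ->
  forall x y, a < x -> x < y -> y < b -> f y < f x.
Proof.
  intros H x y Hx Hxy Hy.
  destruct (MVT_cor2 f (Derive f) x y) as [z [Hz1 Hz2]]; [lra| |].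
  { intros z Hz. apply is_derive_Reals. apply Derive_correct. apply H. lra. }
  assert (Derive f z < 0) by (apply H; lra).
  assert (Derive f z * (y - x) < 0) by (apply Rmult_neg_pos; lra). lra.
Qed.

(* Extension by the value at 0: continuity on closed intervals [0, b] then makes sense. *)
Definition ext0 (f : R -> R) (y : R) : R := f (Rmax 0 y).

Lemma ext0_eq f y : 0 <= y -> ext0 f y = f y.
Proof. intros Hy. unfold ext0. rewrite Rmax_right by exact Hy. reflexivity. Qed.

Definition regular_at (m : R) (f : R -> R) (x : R) : Prop :=
  ex_derive f x /\ ex_derive (fm m f) x /\ ex_derive (Derive (fm m f)) x.

Section Solution.

Variables (N : nat) (m sigma p A X : R) (f : R -> R).
Hypothesis Hf : is_sol_on N m sigma p A f X.

Lemma sol_init : f 0 = A.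
Proof. apply Hf. Qed.

Lemma sol_pos x : 0 <= x < X -> 0 < f x.
Proof. apply Hf. Qed.

Lemma sol_regular x : 0 < x < X -> regular_at m f x.
Proof.
  intros Hx. destruct Hf as [_ [_ [_ [_ [H _]]]]]. destruct (H x Hx) as [? [? [? _]]].
  repeat split; assumption.
Qed.

Lemma sol_residual x : 0 < x < X -> ode_residual N m sigma p f x = 0.
Proof. apply Hf. Qed.

Lemma sol_vanishes_at_0 : vanishes_at_0 (fun x => f x - A).
Proof. apply vanishes_at_0_filterlim. apply Hf. Qed.

Lemma sol_Derive_fm_vanishes_at_0 : vanishes_at_0 (Derive (fm m f)).
Proof.
  apply (vanishes_at_0_ext _ (fun x => Derive (fm m f) x - 0)).
  - apply vanishes_at_0_filterlim. apply Hf.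
  - exists 1. split; [lra|]. intros x _. ring.
Qed.

Lemma sol_ext0_continuous x : 0 <= x < X -> continuity_pt (ext0 f) x.
Proof.
  intros Hx. unfold ext0. apply continuity_pt_filterlim. intros P [e He].
  destruct (Req_dec x 0) as [->|Hx0].
  - destruct (sol_vanishes_at_0 e (cond_pos e)) as [d [Hd Hd']].
    exists (mkposreal d Hd). intros y Hy. apply He.
    change (Rabs (y - 0) < d) in Hy. rewrite Rminus_0_r in Hy.
    rewrite (Rmax_left 0 0), sol_init by lra.
    destruct (Rle_or_lt y 0) as [Hy0|Hy0].
    + rewrite Rmax_left, sol_init by lra. change (Rabs (A - A) < e).
      rewrite Rminus_diag, Rabs_R0. apply cond_pos.
    + rewrite Rmax_right by lra. apply Hd'. apply Rabs_def2 in Hy. lra.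
  - assert (Hx' : 0 < x < X) by lra.
    destruct (sol_regular x Hx') as [Hex _].
    pose proof (derivable_continuous_pt _ _ (ex_derive_Reals_0 _ _ Hex)) as Hc.
    apply continuity_pt_filterlim in Hc. destruct (Hc _ (locally_ball (f x) e)) as [d Hd].
    exists (mkposreal _ (Rmin_pos d x (cond_pos d) ltac:(lra))). intros y Hy. apply He.
    change (Rabs (y - x) < Rmin d x) in Hy.
    pose proof (Rmin_l d x). pose proof (Rmin_r d x). apply Rabs_def2 in Hy.
    rewrite (Rmax_right 0 y), (Rmax_right 0 x) by lra. apply Hd.
    change (Rabs (y - x) < d). apply Rabs_def1; lra.
Qed.

Hypothesis Hdec : forall x, 0 < x < X -> Derive f x < 0.

Lemma sol_decreasing x y : 0 < x -> x < y -> y < X -> f y < f x.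
Proof.
  apply decreasing_of_Derive_neg. intros z Hz. split; [apply sol_regular|apply Hdec]; exact Hz.
Qed.

Lemma sol_lt_init x : 0 < x < X -> f x < A.
Proof.
  intros Hx. destruct (Rlt_or_le (f x) A) as [|HA]; [assumption|exfalso].
  assert (Hx2 : f x < f (x / 2)) by (apply sol_decreasing; lra).
  destruct (sol_vanishes_at_0 (f (x/2) - f x)) as [d [Hd0 Hd1]]; [lra|].
  set (y := Rmin (d/2) (x/4)).
  assert (0 < y) by (unfold y; apply Rmin_pos; lra).
  assert (y <= d/2) by apply Rmin_l. assert (y <= x/4) by apply Rmin_r.
  assert (f (x/2) < f y) by (apply sol_decreasing; lra).
  assert (Hy : Rabs (f y - A) < f (x / 2) - f x) by (apply Hd1; lra).
  apply Rabs_def2 in Hy. lra.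
Qed.

Lemma sol_nonincreasing x y : 0 <= x -> x <= y -> y < X -> f y <= f x.
Proof.
  intros Hx Hxy Hy.
  destruct (Req_dec x y) as [->|Hne]; [lra|].
  destruct (Req_dec x 0) as [->|Hx0].
  - rewrite sol_init. left. apply sol_lt_init. lra.
  - left. apply sol_decreasing; lra.
Qed.

Lemma sol_le_init x : 0 <= x < X -> f x <= A.
Proof. intros Hx. rewrite <- sol_init. apply sol_nonincreasing; lra. Qed.

End Solution.

(** * Rescaling *)

Lemma is_derive_scal_comp (h : R -> R) c s x : ex_derive h (s * x) ->
  is_derive (fun t => c * h (s * t)) x (c * s * Derive h (s * x)).
Proof.
  intros H. rewrite Rmult_assoc. apply is_derive_scal.
  apply (is_derive_comp h (fun t => s * t)); [apply Derive_correct, H|].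
  auto_derive; auto; ring.
Qed.

Lemma locally_scaled_in x X s : 0 < s -> 0 < x -> s * x < X ->
  locally x (fun t => 0 < t /\ s * t < X).
Proof.
  intros Hs Hx HX. assert (Hd : 0 < Rmin x (X / s - x)).
  { apply Rmin_pos; [lra|]. apply Rlt_0_minus. apply (Rmult_lt_reg_l s); [lra|].
    field_simplify; lra. }
  exists (mkposreal _ Hd). intros y Hy. change (Rabs (y - x) < Rmin x (X / s - x)) in Hy.
  pose proof (Rmin_l x (X / s - x)). pose proof (Rmin_r x (X / s - x)).
  apply Rabs_def2 in Hy. split; [lra|].
  replace X with (s * (X / s)) by (field; lra). apply Rmult_lt_compat_l; lra.
Qed.

Section Scaling.

Variables (N : nat) (m sigma p A X nu s : R) (f : R -> R).
Hypotheses (Hf : is_sol_on N m sigma p A f X) (Hnu : 0 < nu) (Hs : 0 < s).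

Let g t := nu * f (s * t).

Lemma fm_scaled t : 0 < t -> s * t < X -> fm m g t = Rpower nu m * fm m f (s * t).
Proof.
  intros Ht HtX. unfold fm, g. symmetry. apply Rpower_mult_distr; [exact Hnu|].
  apply (sol_pos _ _ _ _ _ _ _ Hf). nra.
Qed.

Lemma is_derive_fm_scaled t : 0 < t -> s * t < X ->
  is_derive (fm m g) t (Rpower nu m * s * Derive (fm m f) (s * t)).
Proof.
  intros Ht HtX.
  apply (is_derive_ext_loc (fun t => Rpower nu m * fm m f (s * t))).
  - eapply filter_imp; [|apply (locally_scaled_in t X s Hs Ht HtX)].
    intros y [Hy HyX]. symmetry. apply fm_scaled; assumption.
  - apply is_derive_scal_comp. apply (sol_regular _ _ _ _ _ _ _ Hf). nra.
Qed.

Lemma Derive_scaled x : 0 < x -> s * x < X ->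
  (ex_derive g x /\ Derive g x = nu * s * Derive f (s * x)) /\
  (ex_derive (fm m g) x /\ Derive (fm m g) x = Rpower nu m * s * Derive (fm m f) (s * x)) /\
  (ex_derive (Derive (fm m g)) x /\
     Derive (Derive (fm m g)) x = Rpower nu m * s * s * Derive (Derive (fm m f)) (s * x)).
Proof.
  intros Hx HX.
  assert (Hsx : 0 < s * x < X) by (split; [nra|exact HX]).
  destruct (sol_regular _ _ _ _ _ _ _ Hf _ Hsx) as [Hd0 [_ Hd2]].
  assert (H0 := is_derive_scal_comp f nu s x Hd0).
  assert (H1 := is_derive_fm_scaled x Hx HX).
  assert (H2 : is_derive (Derive (fm m g)) x
                 (Rpower nu m * s * s * Derive (Derive (fm m f)) (s * x))).
  { apply (is_derive_ext_loc (fun t => Rpower nu m * s * Derive (fm m f) (s * t))).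
    - eapply filter_imp; [|apply (locally_scaled_in x X s Hs Hx HX)].
      intros y [Hy HyX]. symmetry. apply is_derive_unique, is_derive_fm_scaled; assumption.
    - apply is_derive_scal_comp. exact Hd2. }
  repeat split; try (eexists; eassumption); apply is_derive_unique; assumption.
Qed.

Lemma regular_at_scaled x : 0 < x -> s * x < X -> regular_at m g x.
Proof.
  intros Hx HX. destruct (Derive_scaled x Hx HX) as [[? _] [[? _] [? _]]].
  repeat split; assumption.
Qed.

End Scaling.

(* [f |-> nu f(nu^(-(m-1)/2) .)] multiplies every term of the equation by [nu], except the
   absorption term, which gets the extra factor [nu^((m-1)sigma/2 + p - 1)]: for [nu > 1]
   it turns solutions into strict supersolutions. *)
Definition rescale_coef (m nu : R) : R := / Rpower nu ((m - 1) / 2).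

Definition rescale (m nu : R) (f : R -> R) (t : R) : R := nu * f (rescale_coef m nu * t).

Lemma rescale_coef_pos m nu : 0 < rescale_coef m nu.
Proof. apply Rinv_0_lt_compat, Rpower_pos. Qed.

Lemma rescale_coef_lt_1 m nu : 1 < m -> 1 < nu -> rescale_coef m nu < 1.
Proof.
  intros Hm Hnu. unfold rescale_coef. rewrite <- Rinv_1.
  apply Rinv_lt_contravar; [rewrite Rmult_1_l; apply Rpower_pos|].
  apply Rpower_gt_1; lra.
Qed.

Lemma rescale_coef_antitone m nu nu' : 1 < m -> 0 < nu <= nu' ->
  rescale_coef m nu' <= rescale_coef m nu.
Proof.
  intros Hm Hnu. apply Rinv_le_contravar; [apply Rpower_pos|].
  apply Rle_Rpower_l; lra.
Qed.

Lemma rescale_coef_le_1 m nu : 1 < m -> 1 <= nu -> rescale_coef m nu <= 1.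
Proof.
  intros Hm Hnu. unfold rescale_coef. rewrite <- Rinv_1. apply Rinv_le_contravar; [lra|].
  rewrite <- (Rpower_O nu) at 1 by lra. apply Rle_Rpower; lra.
Qed.

Lemma ode_residual_rescale (N : nat) m sigma p A f X nu x :
  is_sol_on N m sigma p A f X -> 0 < nu -> 0 < x -> rescale_coef m nu * x < X ->
  ode_residual N m sigma p (rescale m nu f) x =
  nu * Rpower (rescale_coef m nu * x) sigma * Rpower (f (rescale_coef m nu * x)) p *
    (1 - Rpower nu ((m - 1) / 2 * sigma + p - 1)).
Proof.
  intros Hf Hnu Hx HX.
  set (K := Rpower nu ((m - 1) / 2)).
  assert (HK : 0 < K) by apply Rpower_pos.
  pose proof (rescale_coef_pos m nu) as Hs.
  destruct (Derive_scaled N m sigma p A X nu (rescale_coef m nu) f Hf Hnu Hs x Hx HX)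
    as [[_ E1] [[_ E2] [_ E3]]].
  unfold rescale. set (s := rescale_coef m nu) in *. set (y := s * x) in *.
  assert (Hy : 0 < y < X) by (unfold y; split; [nra|exact HX]).
  assert (Hres := sol_residual _ _ _ _ _ _ _ Hf y Hy).
  assert (Hfy := sol_pos _ _ _ _ _ _ _ Hf y ltac:(lra)).
  assert (Hxy : x = y * K) by (unfold y, s, rescale_coef; fold K; field; lra).
  assert (Hm : Rpower nu m = nu * K * K).
  { unfold K. rewrite <- (Rpower_1 nu) at 2 by lra. rewrite <- !Rpower_plus. f_equal. field. }
  assert (Hxs : Rpower x sigma = Rpower y sigma * Rpower nu ((m - 1) / 2 * sigma)).
  { rewrite Hxy, <- Rpower_mult_distr by lra. unfold K. rewrite Rpower_mult. reflexivity. }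
  assert (Hg : Rpower (nu * f y) p = Rpower nu p * Rpower (f y) p).
  { symmetry. apply Rpower_mult_distr; lra. }
  assert (Hpow : Rpower nu p =
                 Rpower nu ((m - 1) / 2 * sigma + p - 1) * nu / Rpower nu ((m - 1) / 2 * sigma)).
  { pose proof (Rpower_pos nu ((m - 1) / 2 * sigma)).
    apply (Rmult_eq_reg_l (Rpower nu ((m - 1) / 2 * sigma))); [|lra].
    rewrite <- Rpower_plus. field_simplify; [|lra].
    rewrite <- (Rpower_1 nu) at 3 by lra. rewrite <- Rpower_plus. f_equal. ring. }
  unfold ode_residual in *. change (Derive_n ?h 2 ?z) with (Derive (Derive h) z) in *.
  fold y. rewrite E1, E2, E3, Hxs, Hg, Hm.
  replace (Derive (Derive (fm m f)) y) with
    (Rpower y sigma * Rpower (f y) p - ((INR N - 1) / y * Derive (fm m f) y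
     + alpha m sigma p * f y + beta m sigma p * y * Derive f y)) by lra.
  rewrite Hxy, Hpow. unfold s, rescale_coef. fold K.
  pose proof (Rpower_pos nu ((m - 1) / 2 * sigma)). field. lra.
Qed.

Lemma ode_residual_rescale_neg (N : nat) m sigma p A f X nu x :
  std_params N m sigma p -> is_sol_on N m sigma p A f X -> 1 < nu ->
  0 < x -> rescale_coef m nu * x < X ->
  ode_residual N m sigma p (rescale m nu f) x < 0.
Proof.
  intros [_ [Hm [Hsig Hp]]] Hf Hnu Hx HX.
  rewrite (ode_residual_rescale N m sigma p A f X nu x Hf ltac:(lra) Hx HX).
  pose proof (rescale_coef_pos m nu).
  assert (0 < f (rescale_coef m nu * x)) by (apply (sol_pos _ _ _ _ _ _ _ Hf); nra).
  assert (1 < Rpower nu ((m - 1) / 2 * sigma + p - 1)).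
  { apply Rpower_gt_1; [lra|]. assert (0 < (m - 1) / 2 * sigma) by (apply Rmult_lt_0_compat; lra). lra. }
  pose proof (Rpower_pos (rescale_coef m nu * x) sigma).
  pose proof (Rpower_pos (f (rescale_coef m nu * x)) p).
  assert (0 < nu * Rpower (rescale_coef m nu * x) sigma * Rpower (f (rescale_coef m nu * x)) p).
  { apply Rmult_lt_0_compat; [apply Rmult_lt_0_compat|]; lra. }
  nra.
Qed.

(** * Touching points *)

Lemma Derive_minus_loc (u v : R -> R) a b c : a < c < b ->
  (forall x, a < x < b -> ex_derive u x /\ ex_derive v x) ->
  locally c (fun t => Derive (fun x => u x - v x) t = Derive u t - Derive v t).
Proof.
  intros Hc H. apply (locally_interval _ c a b); try (simpl; lra).
  intros y Hay Hyb. simpl in Hay, Hyb. apply Derive_minus; apply H; lra.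
Qed.

Lemma ode_residual_le_at_touching (N : nat) m sigma p (f g : R -> R) a b c :
  0 <= m -> a < c < b ->
  (forall x, a < x < b -> 0 < f x <= g x) -> g c = f c ->
  (forall x, a < x < b -> regular_at m f x) -> (forall x, a < x < b -> regular_at m g x) ->
  ode_residual N m sigma p f c <= ode_residual N m sigma p g c.
Proof.
  intros Hm Hc Hfg Heq Hf Hg.
  assert (Hd0 : Derive g c = Derive f c).
  { assert (Hmin : Derive (fun t => g t - f t) c = 0).
    { apply (Derive_eq_0_at_min _ a b c Hc).
      - intros x Hx. specialize (Hfg x Hx). lra.
      - apply (ex_derive_minus g f); [apply Hg|apply Hf]; exact Hc. }
    rewrite Derive_minus in Hmin by (apply Hg || apply Hf; exact Hc). lra. }
  set (h := fun t => fm m g t - fm m f t).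
  assert (Hhmin : forall x, a < x < b -> h c <= h x).
  { intros x Hx. unfold h, fm. rewrite Heq, Rminus_diag.
    assert (Rpower (f x) m <= Rpower (g x) m) by (apply Rle_Rpower_l; [lra|apply Hfg, Hx]).
    lra. }
  assert (Hh : forall x, a < x < b -> ex_derive h x).
  { intros x Hx. apply (ex_derive_minus (fm m g) (fm m f)); [apply Hg|apply Hf]; exact Hx. }
  assert (Hd1 : Derive (fm m g) c = Derive (fm m f) c).
  { assert (H0 := Derive_eq_0_at_min h a b c Hc Hhmin (Hh c Hc)).
    unfold h in H0. rewrite Derive_minus in H0 by (apply Hg || apply Hf; exact Hc). lra. }
  assert (Hd2 : is_derive (Derive h) c
                  (Derive (Derive (fm m g)) c - Derive (Derive (fm m f)) c)).
  { apply (is_derive_ext_loc (fun t => Derive (fm m g) t - Derive (fm m f) t)).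
    - eapply filter_imp; [|apply (Derive_minus_loc (fm m g) (fm m f) a b c Hc)].
      + intros t Ht. symmetry. exact Ht.
      + intros x Hx. split; [apply Hg|apply Hf]; exact Hx.
    - apply (is_derive_minus (Derive (fm m g)) (Derive (fm m f)));
        apply Derive_correct; [apply Hg|apply Hf]; exact Hc. }
  assert (Hconv := Derive2_ge_0_at_min h a b c Hc Hhmin Hh (ex_intro _ _ Hd2)).
  rewrite (is_derive_unique _ _ _ Hd2) in Hconv.
  unfold ode_residual. change (Derive_n ?u 2 ?z) with (Derive (Derive u) z).
  rewrite Hd0, Hd1, Heq. lra.
Qed.

Lemma le_opp_of_halving (w d : R -> R) (P : R -> Prop) M0 :
  0 <= M0 -> (forall t, P t -> w t <= M0) ->
  (forall M, 0 <= M -> (forall t, P t -> w t <= M) -> forall t, P t -> w t <= M / 2 - d t) ->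
  (forall t, P t -> 0 <= d t) ->
  forall t, P t -> w t <= - d t.
Proof.
  intros HM0 Hw0 Hhalf Hd.
  assert (Hiter : forall k t, P t -> w t <= M0 * (/ 2) ^ k).
  { induction k as [|k IH]; intros t Ht.
    - rewrite pow_O, Rmult_1_r. apply Hw0, Ht.
    - assert (HMk : 0 <= M0 * (/ 2) ^ k) by (apply Rmult_le_pos; [lra|apply pow_le; lra]).
      specialize (Hhalf _ HMk IH t Ht). specialize (Hd t Ht).
      rewrite <- tech_pow_Rmult. lra. }
  intros t Ht. destruct (Rle_or_lt (w t) (- d t)) as [|Hlt]; [assumption|exfalso].
  destruct (pow_lt_1_zero (/ 2) ltac:(rewrite Rabs_right; lra) ((w t + d t) / (M0 + 1)))
    as [k Hk]; [apply Rdiv_lt_0_compat; lra|].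
  specialize (Hk k (Nat.le_refl k)). rewrite Rabs_right in Hk by (apply Rle_ge, pow_le; lra).
  assert (Hpk : 0 <= (/ 2) ^ k) by (apply pow_le; lra).
  assert (HMk : 0 <= M0 * (/ 2) ^ k) by (apply Rmult_le_pos; lra).
  specialize (Hhalf _ HMk (Hiter k) t Ht).
  assert ((M0 + 1) * (/ 2) ^ k < w t + d t).
  { apply (Rmult_lt_compat_l (M0 + 1)) in Hk; [|lra].
    replace ((M0 + 1) * ((w t + d t) / (M0 + 1))) with (w t + d t) in Hk by (field; lra). lra. }
  nra.
Qed.

Lemma is_derive_weighted_sum (U G : R -> R) n c x u' g' :
  is_derive U x u' -> is_derive G x g' ->
  is_derive (fun t => t ^ n * U t + c * t ^ S n * G t) x
    (INR n * x ^ pred n * U x + x ^ n * u' + c * (INR (S n) * x ^ n * G x + x ^ S n * g')).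
Proof.
  intros HU HG.
  evar (l : R). replace (INR n * x ^ pred n * U x + _ + _) with l; unfold l; clear l.
  - apply (is_derive_plus (fun t => t ^ n * U t) (fun t => c * t ^ S n * G t)).
    + apply (is_derive_mult (fun t => t ^ n) U); [apply is_derive_pow, is_derive_id|exact HU|].
      intros; apply Rmult_comm.
    + apply (is_derive_mult (fun t => c * t ^ S n) G);
        [apply is_derive_scal, is_derive_pow, is_derive_id|exact HG|].
      intros; apply Rmult_comm.
  - unfold plus, mult, one. simpl.
    change (match n with 0%nat => 1 | S _ => INR n + 1 end) with (INR (S n)). ring.
Qed.

Lemma weighted_sum_vanishes_at_0 (n : nat) beta (U G : R -> R) : 0 <= beta ->
  vanishes_at_0 U -> vanishes_at_0 G ->
  vanishes_at_0 (fun t => t ^ n * U t + beta * t ^ S n * G t).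
Proof.
  intros Hbeta HU0 HG0.
  apply (vanishes_at_0_le _ (fun t => Rabs (U t) + beta * Rabs (G t))).
  - apply vanishes_at_0_plus; [|apply vanishes_at_0_scal]; apply vanishes_at_0_abs; assumption.
  - exists 1. split; [lra|]. intros x Hx.
    pose proof (pow_le_1 x n ltac:(lra)). pose proof (pow_le_1 x (S n) ltac:(lra)).
    pose proof (Rabs_pos (U x)). pose proof (Rabs_pos (G x)).
    rewrite (Rabs_right (Rabs (U x) + _)) by nra.
    eapply Rle_trans; [apply Rabs_triang|]. rewrite !Rabs_mult.
    rewrite (Rabs_right (x ^ n)), (Rabs_right (x ^ S n)), (Rabs_right beta) by lra.
    assert (x ^ n * Rabs (U x) <= Rabs (U x)) by nra.
    assert (x ^ S n * Rabs (G x) <= Rabs (G x)) by nra.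
    assert (beta * x ^ S n * Rabs (G x) <= beta * Rabs (G x)) by nra.
    lra.
Qed.

Lemma integrate_flux (n : nat) (beta a c0 sigma eps : R) (U G r : R -> R) :
  0 <= beta -> 0 < sigma ->
  (forall t, 0 < t <= eps ->
     is_derive (fun t => t ^ n * U t + beta * t ^ S n * G t) t (t ^ n * r t)) ->
  (forall t, 0 < t <= eps -> r t <= a - c0 * Rpower t sigma) ->
  (forall t, 0 < t <= eps -> 0 <= G t) ->
  vanishes_at_0 U -> vanishes_at_0 G ->
  forall t, 0 < t <= eps ->
    U t <= a / INR (S n) * t - c0 / (INR (S n) + sigma) * Rpower t (1 + sigma).
Proof.
  intros Hbeta Hsig HD Hr HG HU0 HG0.
  set (Nn := INR (S n)).
  assert (HNn : Nn = INR n + 1) by apply S_INR.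
  pose proof (pos_INR n).
  set (P := fun t => a / Nn * t ^ S n - c0 / (Nn + sigma) * Rpower t (Nn + sigma)).
  assert (HP : forall t, 0 < t -> is_derive P t (t ^ n * (a - c0 * Rpower t sigma))).
  { intros t Ht.
    evar (l : R). replace (t ^ n * _) with l; unfold l; clear l.
    - apply (is_derive_minus (fun t => a / Nn * t ^ S n)
                             (fun t => c0 / (Nn + sigma) * Rpower t (Nn + sigma))).
      + apply is_derive_scal, is_derive_pow, is_derive_id.
      + apply is_derive_scal, is_derive_Rpower, Ht.
    - replace (Nn + sigma - 1) with (INR n + sigma) by lra.
      rewrite Rpower_plus_INR by exact Ht. unfold minus, plus, opp, mult, one. simpl.
      change (match n with 0%nat => 1 | S _ => INR n + 1 end) with Nn.
      match goal with |- ?u = ?v => change (@eq R u v) end. field. lra. }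
  assert (HDle : forall t, 0 < t <= eps -> t ^ n * U t + beta * t ^ S n * G t <= P t).
  { apply (le_of_Derive_le_from_0 _ P (fun t => t ^ n * r t)
             (fun t => t ^ n * (a - c0 * Rpower t sigma)) eps HD).
    - intros t Ht. apply HP. lra.
    - intros t Ht. apply Rmult_le_compat_l; [apply pow_le; lra|apply Hr, Ht].
    - apply vanishes_at_0_minus; [apply weighted_sum_vanishes_at_0; assumption|].
      apply vanishes_at_0_minus; apply vanishes_at_0_scal;
        [apply vanishes_at_0_pow|apply vanishes_at_0_Rpower; lra]. }
  intros t Ht. assert (Htn : 0 < t ^ n) by (apply pow_lt; lra).
  apply (Rmult_le_reg_l (t ^ n)); [lra|].
  assert (HDt := HDle t Ht). unfold P in HDt.
  replace (Nn + sigma) with (INR n + (1 + sigma)) in HDt at 2 by lra.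
  rewrite Rpower_plus_INR in HDt by lra.
  assert (HGt : 0 <= beta * t ^ S n * G t)
    by (apply Rmult_le_pos; [apply Rmult_le_pos; [lra|apply pow_le; lra]|apply HG, Ht]).
  simpl pow in HDt, HGt. nra.
Qed.

Lemma integrate_twice (n : nat) (beta a c0 sigma eps : R) (U G w r : R -> R) :
  0 <= beta -> 0 < sigma ->
  (forall t, 0 < t <= eps ->
     is_derive (fun t => t ^ n * U t + beta * t ^ S n * G t) t (t ^ n * r t)) ->
  (forall t, 0 < t <= eps -> is_derive w t (U t)) ->
  (forall t, 0 < t <= eps -> r t <= a - c0 * Rpower t sigma) ->
  (forall t, 0 < t <= eps -> 0 <= G t) ->
  vanishes_at_0 U -> vanishes_at_0 G -> vanishes_at_0 w ->
  forall t, 0 < t <= eps ->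
    w t <= a / (2 * INR (S n)) * t ^ 2
           - c0 / ((INR (S n) + sigma) * (2 + sigma)) * Rpower t (2 + sigma).
Proof.
  intros Hbeta Hsig HD Hw Hr HG HU0 HG0 Hw0.
  assert (HNn : 1 <= INR (S n)) by (rewrite S_INR; pose proof (pos_INR n); lra).
  set (Nn := INR (S n)) in *.
  apply (le_of_Derive_le_from_0 w _ U
           (fun t => a / Nn * t - c0 / (Nn + sigma) * Rpower t (1 + sigma)) eps Hw).
  - intros t Ht. evar (l : R).
    replace (a / Nn * t - c0 / (Nn + sigma) * Rpower t (1 + sigma)) with l;
      unfold l; clear l.
    + apply (is_derive_minus (fun t => a / (2 * Nn) * t ^ 2)
               (fun t => c0 / ((Nn + sigma) * (2 + sigma)) * Rpower t (2 + sigma))).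
      * apply is_derive_scal, is_derive_pow, is_derive_id.
      * apply is_derive_scal, is_derive_Rpower. lra.
    + replace (2 + sigma - 1) with (1 + sigma) by ring.
      unfold minus, plus, opp, mult, one. simpl.
      match goal with |- ?u = ?v => change (@eq R u v) end. field. lra.
  - apply (integrate_flux n beta a c0 sigma eps U G r); assumption.
  - apply vanishes_at_0_minus; [exact Hw0|]. apply vanishes_at_0_minus;
      apply vanishes_at_0_scal; [apply (vanishes_at_0_pow 1)|apply vanishes_at_0_Rpower; lra].
Qed.

(* At 0 both profiles start from A2 and the maximum principle gives nothing.  Instead, the
   divergence form of the equation is integrated twice from 0: a bound [w <= M] on
   [w = g^m - f2^m] near 0 improves to [w <= M/2 - c1 t^(2+sigma)], and iterating forces
   [w < 0]. *)
Section TouchingAtZero.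

Variables (n : nat) (m sigma p A1 A2 X b : R) (f1 f2 : R -> R).
Hypotheses (Hpar : std_params (S n) m sigma p) (HA1 : 0 < A1) (HA12 : A1 < A2)
  (Hf1 : is_sol_on (S n) m sigma p A1 f1 X) (Hf2 : is_sol_on (S n) m sigma p A2 f2 X)
  (Hd1 : forall x, 0 < x < X -> Derive f1 x < 0) (Hd2 : forall x, 0 < x < X -> Derive f2 x < 0)
  (Hb : 0 < b < X).

Let lam := A2 / A1.
Let s := rescale_coef m lam.
Let g := rescale m lam f1.

Hypothesis Hle : forall t, 0 < t <= b -> f2 t <= g t.

Let Nn := INR (S n).
Let G t := g t - f2 t.
Let U t := Derive (fm m g) t - Derive (fm m f2) t.
Let w t := fm m g t - fm m f2 t.

Lemma Nn_ge_1 : 1 <= Nn.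
Proof. unfold Nn. rewrite S_INR. pose proof (pos_INR n). lra. Qed.

Lemma lam_gt_1 : 1 < lam.
Proof. unfold lam. apply (Rmult_lt_reg_r A1); [lra|]. field_simplify; lra. Qed.

Lemma s_in_01 : 0 < s < 1.
Proof.
  split; [apply rescale_coef_pos|]. apply rescale_coef_lt_1; [apply Hpar|apply lam_gt_1].
Qed.

Lemma scaled_in t : 0 < t <= b -> 0 < s * t < b.
Proof. intros Ht. pose proof s_in_01. split; nra. Qed.

Lemma g_le_A2 t : 0 < t <= b -> g t <= A2.
Proof.
  intros Ht. pose proof (scaled_in t Ht). pose proof lam_gt_1.
  unfold g, rescale. fold s. replace A2 with (lam * A1) by (unfold lam; field; lra).
  apply Rmult_le_compat_l; [lra|]. apply (sol_le_init _ _ _ _ _ _ _ Hf1 Hd1). lra.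
Qed.

Lemma f2_between t : 0 < t <= b -> 0 < f2 b <= f2 t /\ f2 t <= g t.
Proof.
  intros Ht. split; [split|apply Hle, Ht].
  - apply (sol_pos _ _ _ _ _ _ _ Hf2). lra.
  - apply (sol_nonincreasing _ _ _ _ _ _ _ Hf2 Hd2); lra.
Qed.

Lemma regular_g t : 0 < t <= b -> regular_at m g t.
Proof.
  intros Ht. pose proof (scaled_in t Ht). pose proof lam_gt_1. pose proof s_in_01.
  apply (regular_at_scaled (S n) m sigma p A1 X lam s f1 Hf1); lra.
Qed.

Lemma regular_f2 t : 0 < t <= b -> regular_at m f2 t.
Proof. intros Ht. apply (sol_regular _ _ _ _ _ _ _ Hf2). lra. Qed.

Let E := (m - 1) / 2 * sigma + p - 1.
Let c0 := lam * Rpower s sigma * Rpower (f1 b) p * (Rpower lam E - 1).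

Lemma absorption_factor_gt_1 : 1 < Rpower lam E.
Proof.
  destruct Hpar as [_ [Hm [Hsig Hp]]].
  apply Rpower_gt_1; [apply lam_gt_1|]. unfold E.
  assert (0 < (m - 1) / 2 * sigma) by (apply Rmult_lt_0_compat; lra). lra.
Qed.

Lemma c0_pos : 0 < c0.
Proof.
  pose proof absorption_factor_gt_1. pose proof lam_gt_1.
  pose proof (Rpower_pos s sigma). pose proof (sol_pos _ _ _ _ _ _ _ Hf1 b ltac:(lra)).
  pose proof (Rpower_pos (f1 b) p).
  unfold c0. apply Rmult_lt_0_compat; [|lra].
  apply Rmult_lt_0_compat; [apply Rmult_lt_0_compat|]; lra.
Qed.

Lemma residual_g_le t : 0 < t <= b ->
  ode_residual (S n) m sigma p g t <= - c0 * Rpower t sigma.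
Proof.
  intros Ht. pose proof (scaled_in t Ht). pose proof s_in_01. pose proof lam_gt_1.
  pose proof c0_pos. destruct Hpar as [_ [Hm [Hsig Hp]]].
  unfold g. rewrite (ode_residual_rescale _ _ _ _ A1 f1 X lam t Hf1) by (fold s; lra).
  fold s E. rewrite <- Rpower_mult_distr by lra.
  assert (Rpower (f1 b) p <= Rpower (f1 (s * t)) p).
  { apply Rle_Rpower_l; [lra|]. split; [apply (sol_pos _ _ _ _ _ _ _ Hf1); lra|].
    left. apply (sol_decreasing _ _ _ _ _ _ _ Hf1 Hd1); lra. }
  assert (Hst : 0 < lam * (Rpower s sigma * Rpower t sigma)).
  { pose proof (Rpower_pos s sigma). pose proof (Rpower_pos t sigma).
    apply Rmult_lt_0_compat; [lra|apply Rmult_lt_0_compat; lra]. }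
  pose proof absorption_factor_gt_1.
  assert (0 <= lam * (Rpower s sigma * Rpower t sigma) * (Rpower lam E - 1)
               * (Rpower (f1 (s * t)) p - Rpower (f1 b) p))
    by (apply Rmult_le_pos; [apply Rmult_le_pos|]; lra).
  unfold c0. nra.
Qed.

Let Q := m * Rpower (f2 b) (m - 1).

Lemma Q_pos : 0 < Q.
Proof.
  destruct Hpar as [_ [Hm _]]. apply Rmult_lt_0_compat; [lra|apply Rpower_pos].
Qed.

Lemma w_ge t : 0 < t <= b -> 0 <= G t /\ Q * G t <= w t.
Proof.
  intros Ht. destruct Hpar as [_ [Hm _]]. destruct (f2_between t Ht) as [[Hf2b Hf2t] Hg].
  split; [unfold G; lra|].
  pose proof (Rpower_sub_ge m (g t) (f2 t) ltac:(lra) ltac:(lra)).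
  assert (Rpower (f2 b) (m - 1) <= Rpower (f2 t) (m - 1)) by (apply Rle_Rpower_l; lra).
  assert (0 <= m * (Rpower (f2 t) (m - 1) - Rpower (f2 b) (m - 1)) * (g t - f2 t))
    by (apply Rmult_le_pos; [apply Rmult_le_pos|]; lra).
  unfold Q, G, w, fm. nra.
Qed.

Lemma w_le t : 0 < t <= b -> w t <= m * Rpower A2 (m - 1) * G t.
Proof.
  intros Ht. destruct Hpar as [_ [Hm _]]. destruct (f2_between t Ht) as [[Hf2b Hf2t] Hg].
  pose proof (g_le_A2 t Ht).
  eapply Rle_trans; [apply (Rpower_sub_le m (g t) (f2 t)); lra|].
  apply Rmult_le_compat_r; [unfold G; lra|]. apply Rmult_le_compat_l; [lra|].
  apply Rle_Rpower_l; lra.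
Qed.

Lemma G_vanishes_at_0 : vanishes_at_0 G.
Proof.
  pose proof s_in_01.
  apply (vanishes_at_0_ext _ (fun t => lam * (f1 (s * t) - A1) - (f2 t - A2))).
  - apply vanishes_at_0_minus; [|apply (sol_vanishes_at_0 _ _ _ _ _ _ _ Hf2)].
    apply vanishes_at_0_scal.
    apply (vanishes_at_0_comp_scal (fun t => f1 t - A1)); [lra|].
    apply (sol_vanishes_at_0 _ _ _ _ _ _ _ Hf1).
  - exists 1. split; [lra|]. intros x _. unfold G, g, rescale. fold s.
    replace A2 with (lam * A1) by (unfold lam; field; lra). ring.
Qed.

Lemma U_vanishes_at_0 : vanishes_at_0 U.
Proof.
  pose proof s_in_01. pose proof lam_gt_1.
  apply vanishes_at_0_minus; [|apply (sol_Derive_fm_vanishes_at_0 _ _ _ _ _ _ _ Hf2)].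
  apply (vanishes_at_0_ext _ (fun t => (Rpower lam m * s) * Derive (fm m f1) (s * t))).
  - apply vanishes_at_0_scal. apply (vanishes_at_0_comp_scal (Derive (fm m f1))); [lra|].
    apply (sol_Derive_fm_vanishes_at_0 _ _ _ _ _ _ _ Hf1).
  - exists b. split; [lra|]. intros x Hx. pose proof (scaled_in x ltac:(lra)).
    destruct (Derive_scaled _ _ _ _ _ _ lam s f1 Hf1 ltac:(lra) ltac:(lra) x ltac:(lra) ltac:(lra))
      as [_ [[_ HD] _]].
    exact HD.
Qed.

Lemma w_vanishes_at_0 : vanishes_at_0 w.
Proof.
  apply (vanishes_at_0_le _ (fun t => (m * Rpower A2 (m - 1)) * G t)).
  - apply vanishes_at_0_scal, G_vanishes_at_0.
  - exists b. split; [lra|]. intros x Hx.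
    destruct (w_ge x ltac:(lra)) as [HG HQG]. pose proof (w_le x ltac:(lra)). pose proof Q_pos.
    assert (0 <= Q * G x) by (apply Rmult_le_pos; lra).
    rewrite !Rabs_right; lra.
Qed.

Let source t := ode_residual (S n) m sigma p g t - ode_residual (S n) m sigma p f2 t
  + Rpower t sigma * (Rpower (g t) p - Rpower (f2 t) p)
  + (Nn * beta m sigma p - alpha m sigma p) * G t.

(* The equation for the difference, in divergence form. *)
Lemma is_derive_flux t : 0 < t <= b ->
  is_derive (fun t => t ^ n * U t + beta m sigma p * t ^ S n * G t) t (t ^ n * source t).
Proof.
  intros Ht. destruct (regular_g t Ht) as [Hg0 [Hg1 Hg2]].
  destruct (regular_f2 t Ht) as [Hf0 [Hf1' Hf2']].
  evar (l : R). replace (t ^ n * source t) with l; unfold l; clear l.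
  - apply (is_derive_weighted_sum U G n _ t
             (Derive (Derive (fm m g)) t - Derive (Derive (fm m f2)) t) (Derive g t - Derive f2 t)).
    + apply (is_derive_minus (Derive (fm m g)) (Derive (fm m f2))); apply Derive_correct; assumption.
    + apply (is_derive_minus g f2); apply Derive_correct; assumption.
  - unfold source, ode_residual, U, G, Nn, minus, plus, opp.
    change (Derive_n ?h 2 ?z) with (Derive (Derive h) z).
    destruct n as [|k]; rewrite ?S_INR, ?INR_0; simpl pow; simpl pred; field; lra.
Qed.

Let C := (p * Rpower A2 (p - 1) + Rabs (Nn * beta m sigma p - alpha m sigma p)) / Q.

Lemma C_nonneg : 0 <= C.
Proof.
  destruct Hpar as [_ [Hm [_ Hp]]]. pose proof Q_pos. pose proof (Rpower_pos A2 (p - 1)).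
  pose proof (Rabs_pos (Nn * beta m sigma p - alpha m sigma p)).
  apply Rdiv_le_0_compat; [nra|lra].
Qed.

Lemma source_le t M : 0 < t <= b -> t <= 1 -> w t <= M -> source t <= C * M - c0 * Rpower t sigma.
Proof.
  intros Ht Ht1 HM. destruct Hpar as [_ [Hm [Hsig Hp]]].
  assert (Hr2 : ode_residual (S n) m sigma p f2 t = 0)
    by (apply (sol_residual _ _ _ _ _ _ _ Hf2); lra).
  destruct (f2_between t Ht) as [[Hf2b Hf2t] Hg]. pose proof (g_le_A2 t Ht).
  destruct (w_ge t Ht) as [HG HQG]. pose proof Q_pos.
  assert (Hts : 0 < Rpower t sigma <= 1) by (split; [apply Rpower_pos|apply Rpower_le_1; lra]).
  assert (Habs : Rpower t sigma * (Rpower (g t) p - Rpower (f2 t) p) <= p * Rpower A2 (p - 1) * G t).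
  { pose proof (Rpower_sub_le p (g t) (f2 t) ltac:(lra) ltac:(lra)).
    assert (Rpower (g t) (p - 1) <= Rpower A2 (p - 1)) by (apply Rle_Rpower_l; lra).
    assert (Rpower (f2 t) p <= Rpower (g t) p) by (apply Rle_Rpower_l; lra).
    assert (p * Rpower (g t) (p - 1) * G t <= p * Rpower A2 (p - 1) * G t).
    { apply Rmult_le_compat_r; [lra|]. apply Rmult_le_compat_l; lra. }
    unfold G in *. nra. }
  assert (Hlin : (Nn * beta m sigma p - alpha m sigma p) * G t <=
                 Rabs (Nn * beta m sigma p - alpha m sigma p) * G t)
    by (apply Rmult_le_compat_r; [lra|apply Rle_abs]).
  assert (HCM : (p * Rpower A2 (p - 1) + Rabs (Nn * beta m sigma p - alpha m sigma p)) * G t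
                <= C * M).
  { pose proof C_nonneg. unfold C in *.
    set (K := p * Rpower A2 (p - 1) + Rabs (Nn * beta m sigma p - alpha m sigma p)) in *.
    replace (K * G t) with (K / Q * (Q * G t)) by (field; lra).
    apply Rmult_le_compat_l; lra. }
  pose proof (residual_g_le t Ht).
  unfold source. rewrite Hr2. lra.
Qed.

Let eps := Rmin 1 (Rmin b (Nn / (C + 1))).
Let c1 := c0 / ((Nn + sigma) * (2 + sigma)).

Lemma eps_bounds : 0 < eps /\ eps <= 1 /\ eps <= b /\ C * eps <= Nn.
Proof.
  pose proof Nn_ge_1. pose proof C_nonneg.
  assert (He3 : eps <= Nn / (C + 1)) by (eapply Rle_trans; [apply Rmin_r|apply Rmin_r]).
  split; [|split; [|split]].
  - apply Rmin_pos; [lra|apply Rmin_pos; [lra|apply Rdiv_lt_0_compat; lra]].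
  - apply Rmin_l.
  - eapply Rle_trans; [apply Rmin_r|apply Rmin_l].
  - apply Rle_trans with (C * (Nn / (C + 1))); [apply Rmult_le_compat_l; lra|].
    apply (Rmult_le_reg_l (C + 1)); [lra|]. field_simplify; nra.
Qed.

Lemma w_halves M : 0 <= M -> (forall t, 0 < t <= eps -> w t <= M) ->
  forall t, 0 < t <= eps -> w t <= M / 2 - c1 * Rpower t (2 + sigma).
Proof.
  intros HM HwM t Ht. destruct eps_bounds as [He0 [He1 [He2 HCe]]].
  destruct Hpar as [_ [Hm [Hsig Hp]]].
  assert (Hbeta : 0 <= beta m sigma p).
  { left. unfold beta, Lpar. apply Rdiv_lt_0_compat; [lra|]. nra. }
  assert (Hw2 := integrate_twice n (beta m sigma p) (C * M) c0 sigma eps U G w source Hbeta Hsig).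
  fold Nn c1 in Hw2. eapply Rle_trans; [apply Hw2; clear Hw2; try exact Ht|].
  - intros x Hx. apply is_derive_flux. lra.
  - intros x Hx. destruct (regular_g x ltac:(lra)) as [_ [Hg1 _]].
    destruct (regular_f2 x ltac:(lra)) as [_ [Hf1' _]].
    apply (is_derive_minus (fm m g) (fm m f2)); apply Derive_correct; assumption.
  - intros x Hx. apply source_le; [lra|lra|apply HwM, Hx].
  - intros x Hx. apply w_ge. lra.
  - apply U_vanishes_at_0.
  - apply G_vanishes_at_0.
  - apply w_vanishes_at_0.
  - pose proof Nn_ge_1. pose proof C_nonneg.
    assert (C * t <= Nn) by nra.
    assert (C * (t * t) <= Nn) by nra.
    assert (C * M * (t * t) <= Nn * M) by nra.
    assert (C * M / (2 * Nn) * t ^ 2 <= M / 2).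
    { apply (Rmult_le_reg_l (2 * Nn)); [lra|]. field_simplify; [simpl; nra|lra]. }
    lra.
Qed.

Lemma rescale_same_init_not_above : False.
Proof.
  destruct eps_bounds as [He0 [He1 [He2 _]]]. destruct Hpar as [_ [Hm [Hsig _]]].
  pose proof c0_pos. pose proof Q_pos.
  assert (Hc1 : 0 < c1)
    by (pose proof Nn_ge_1; unfold c1; apply Rdiv_lt_0_compat; nra).
  assert (Hw : w eps <= - (c1 * Rpower eps (2 + sigma))).
  { apply (le_opp_of_halving w (fun t => c1 * Rpower t (2 + sigma)) (fun t => 0 < t <= eps)
             (Rpower A2 m)); [left; apply Rpower_pos| |exact w_halves| |lra].
    - intros t Ht. destruct (f2_between t ltac:(lra)) as [[Hf2b Hf2t] Hg].
      pose proof (g_le_A2 t ltac:(lra)). pose proof (Rpower_pos (f2 t) m).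
      assert (Rpower (g t) m <= Rpower A2 m) by (apply Rle_Rpower_l; lra).
      unfold w, fm. lra.
    - intros t _. pose proof (Rpower_pos t (2 + sigma)). nra. }
  destruct (w_ge eps ltac:(lra)) as [HG HQG].
  pose proof (Rpower_pos eps (2 + sigma)).
  assert (0 <= Q * G eps) by (apply Rmult_le_pos; lra).
  nra.
Qed.

End TouchingAtZero.

(** * Sliding *)

Section Sliding.

Variables (F : R -> R -> R) (f : R -> R) (lo hi a b : R).
Hypotheses (Hlohi : lo <= hi) (Hab : a <= b)
  (Hmono : forall v v' x, lo <= v <= v' -> v' <= hi -> a <= x <= b -> F v x <= F v' x)
  (Hunif : forall e, 0 < e -> exists r, 0 < r /\
     forall v v', lo <= v <= hi -> lo <= v' <= hi -> Rabs (v - v') < r ->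
     forall x, a <= x <= b -> Rabs (F v x - F v' x) < e)
  (Hcont : forall v x, lo <= v <= hi -> a <= x <= b -> continuity_pt (fun y => F v y - f y) x)
  (Hlo : exists x, a <= x <= b /\ F lo x <= f x)
  (Hhi : forall x, a <= x <= b -> f x < F hi x).

Let above v := forall x, a <= x <= b -> f x < F v x.
Let not_above v := lo <= v <= hi /\ ~ above v.

Lemma above_mono v v' : lo <= v <= v' -> v' <= hi -> above v -> above v'.
Proof. intros Hv Hv' Habv x Hx. eapply Rlt_le_trans; [apply Habv, Hx|apply Hmono; assumption]. Qed.

Lemma not_above_lo : not_above lo.
Proof.
  split; [lra|]. intros Habv. destruct Hlo as [x [Hx Hlox]]. specialize (Habv x Hx). lra.
Qed.

Lemma lub_not_above_bounds nu : is_lub not_above nu -> lo <= nu <= hi.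
Proof.
  intros [Hub Hleast]. split; [apply Hub, not_above_lo|].
  apply Hleast. intros v Hv. apply Hv.
Qed.

Lemma above_right_of_lub nu : is_lub not_above nu -> forall v, nu < v <= hi -> above v.
Proof.
  intros Hnu v Hv. pose proof (lub_not_above_bounds nu Hnu). apply NNPP. intros Hnot.
  assert (v <= nu) by (apply Hnu; split; [lra|exact Hnot]). lra.
Qed.

Lemma le_at_lub nu : is_lub not_above nu -> forall x, a <= x <= b -> f x <= F nu x.
Proof.
  intros Hnu x Hx. pose proof (lub_not_above_bounds nu Hnu).
  destruct (Req_dec nu hi) as [->|Hne]; [left; apply Hhi, Hx|].
  destruct (Rle_or_lt (f x) (F nu x)) as [|Hlt]; [assumption|exfalso].
  destruct (Hunif (f x - F nu x)) as [r [Hr Hr']]; [lra|].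
  set (v := nu + Rmin (r / 2) ((hi - nu) / 2)).
  pose proof (Rmin_l (r / 2) ((hi - nu) / 2)). pose proof (Rmin_r (r / 2) ((hi - nu) / 2)).
  assert (Hv : nu < v <= hi) by (unfold v; pose proof (Rmin_pos (r / 2) ((hi - nu) / 2)); lra).
  assert (Hfv := above_right_of_lub nu Hnu v Hv x Hx).
  assert (Hclose : Rabs (F v x - F nu x) < f x - F nu x).
  { apply Hr'; try lra. rewrite Rabs_right; unfold v in *; lra. }
  apply Rabs_def2 in Hclose. lra.
Qed.

(* If [F nu] stayed strictly above [f], compactness would give a positive gap, and a
   slightly smaller parameter would still be above, contradicting minimality of [nu]. *)
Lemma touches_at_lub nu : is_lub not_above nu -> exists c, a <= c <= b /\ F nu c = f c.
Proof.
  intros Hnu. pose proof (lub_not_above_bounds nu Hnu). apply NNPP. intros Hno.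
  assert (Hlt : forall x, a <= x <= b -> f x < F nu x).
  { intros x Hx. destruct (le_at_lub nu Hnu x Hx) as [|Heq]; [assumption|].
    exfalso. apply Hno. exists x. split; [exact Hx|symmetry; exact Heq]. }
  destruct (Req_dec nu lo) as [->|Hne].
  { apply not_above_lo. exact Hlt. }
  destruct (continuity_ab_min _ a b Hab (fun x Hx => Hcont nu x ltac:(lra) Hx)) as [mx [Hmx Hmxab]].
  set (gap := F nu mx - f mx).
  assert (Hgap : 0 < gap) by (unfold gap; specialize (Hlt mx Hmxab); lra).
  destruct (Hunif gap Hgap) as [r [Hr Hr']].
  set (v := nu - Rmin (r / 2) ((nu - lo) / 2)).
  pose proof (Rmin_l (r / 2) ((nu - lo) / 2)). pose proof (Rmin_r (r / 2) ((nu - lo) / 2)).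
  assert (Hv : lo <= v < nu) by (unfold v; pose proof (Rmin_pos (r / 2) ((nu - lo) / 2)); lra).
  assert (Habv : above v).
  { intros x Hx. assert (Hclose : Rabs (F v x - F nu x) < gap).
    { apply Hr'; try lra. rewrite Rabs_left; unfold v in *; lra. }
    apply Rabs_def2 in Hclose. specialize (Hmx x Hx). unfold gap in *. lra. }
  assert (nu <= v); [|lra].
  apply Hnu. intros u [Hu Hnotu]. destruct (Rle_or_lt u v) as [|Hvu]; [assumption|].
  exfalso. apply Hnotu. apply (above_mono v); [lra|lra|exact Habv].
Qed.

Lemma sliding : exists nu, lo <= nu <= hi /\ (forall x, a <= x <= b -> f x <= F nu x) /\
  exists c, a <= c <= b /\ F nu c = f c.
Proof.
  destruct (completeness not_above) as [nu Hnu].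
  - exists hi. intros v Hv. apply Hv.
  - exists lo. apply not_above_lo.
  - exists nu. split; [apply lub_not_above_bounds, Hnu|].
    split; [apply le_at_lub, Hnu|apply touches_at_lub, Hnu].
Qed.

End Sliding.

Lemma rescale_coef_continuous m v : 0 < v -> continuity_pt (rescale_coef m) v.
Proof.
  intros Hv. apply derivable_continuous_pt, ex_derive_Reals_0.
  exists (- ((m - 1) / 2) * Rpower v (- ((m - 1) / 2) - 1)).
  apply (is_derive_ext (fun u => Rpower u (- ((m - 1) / 2)))).
  - intros u. apply Rpower_Ropp.
  - apply is_derive_Rpower, Hv.
Qed.

Section Family.

Variables (N : nat) (m sigma p A X b : R) (f : R -> R).
Hypotheses (Hm : 1 < m) (Hf : is_sol_on N m sigma p A f X)
  (Hd : forall x, 0 < x < X -> Derive f x < 0) (Hb : 0 < b < X).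

Lemma rescale_ext0_eq v x : 0 <= x -> rescale m v (ext0 f) x = rescale m v f x.
Proof.
  intros Hx. unfold rescale. rewrite ext0_eq; [reflexivity|].
  pose proof (rescale_coef_pos m v). nra.
Qed.

Lemma rescale_coef_mul_in v x : 1 <= v -> 0 <= x <= b -> 0 <= rescale_coef m v * x <= x.
Proof.
  intros Hv Hx. pose proof (rescale_coef_pos m v). pose proof (rescale_coef_le_1 m v Hm Hv).
  split; nra.
Qed.

Lemma rescale_ext0_mono v v' x : 1 <= v <= v' -> 0 <= x <= b ->
  rescale m v (ext0 f) x <= rescale m v' (ext0 f) x.
Proof.
  intros Hv Hx. rewrite !rescale_ext0_eq by lra. unfold rescale.
  pose proof (rescale_coef_mul_in v x ltac:(lra) Hx).
  pose proof (rescale_coef_mul_in v' x ltac:(lra) Hx).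
  assert (rescale_coef m v' * x <= rescale_coef m v * x)
    by (apply Rmult_le_compat_r; [lra|apply rescale_coef_antitone; lra]).
  assert (f (rescale_coef m v * x) <= f (rescale_coef m v' * x))
    by (apply (sol_nonincreasing _ _ _ _ _ _ _ Hf Hd); lra).
  assert (0 < f (rescale_coef m v * x)) by (apply (sol_pos _ _ _ _ _ _ _ Hf); lra).
  nra.
Qed.

Lemma rescale_ext0_continuous v x : 1 <= v -> 0 <= x <= b ->
  continuity_pt (rescale m v (ext0 f)) x.
Proof.
  intros Hv Hx. unfold rescale. apply continuity_pt_scal.
  apply (continuity_pt_comp (fun y => rescale_coef m v * y) (ext0 f)).
  - apply continuity_pt_scal, derivable_continuous_pt, derivable_pt_id.
  - apply (sol_ext0_continuous _ _ _ _ _ _ _ Hf).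
    pose proof (rescale_coef_mul_in v x Hv Hx). lra.
Qed.

Lemma rescale_coef_mul_unif lo hi : 0 < lo -> forall d, 0 < d -> exists r, 0 < r /\
  forall v v', lo <= v <= hi -> lo <= v' <= hi -> Rabs (v - v') < r ->
  forall x, 0 <= x <= b -> Rabs (rescale_coef m v * x - rescale_coef m v' * x) < d.
Proof.
  intros Hlo d Hd0.
  destruct (Heine (rescale_coef m) (fun v => lo <= v <= hi) (compact_P3 lo hi)
              (fun v Hv => rescale_coef_continuous m v ltac:(lra))
              (mkposreal (d / (b + 1)) ltac:(apply Rdiv_lt_0_compat; lra))) as [r Hr].
  exists r. split; [apply cond_pos|]. intros v v' Hv Hv' Hvv x Hx.
  assert (Hss := Hr v v' Hv Hv' Hvv). simpl in Hss.
  rewrite <- Rmult_minus_distr_r, Rabs_mult, (Rabs_right x) by lra.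
  pose proof (Rabs_pos (rescale_coef m v - rescale_coef m v')).
  apply Rle_lt_trans with (Rabs (rescale_coef m v - rescale_coef m v') * (b + 1)); [nra|].
  apply (Rmult_lt_compat_r (b + 1)) in Hss; [|lra].
  replace (d / (b + 1) * (b + 1)) with d in Hss by (field; lra). exact Hss.
Qed.

Lemma rescale_ext0_unif lo hi : 1 <= lo -> forall e, 0 < e -> exists r, 0 < r /\
  forall v v', lo <= v <= hi -> lo <= v' <= hi -> Rabs (v - v') < r ->
  forall x, 0 <= x <= b -> Rabs (rescale m v (ext0 f) x - rescale m v' (ext0 f) x) < e.
Proof.
  intros Hlo e He.
  assert (HA : 0 < A) by (rewrite <- (sol_init _ _ _ _ _ _ _ Hf); apply (sol_pos _ _ _ _ _ _ _ Hf); lra).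
  assert (Hfb : forall y, 0 <= y <= b -> Rabs (ext0 f y) <= A).
  { intros y Hy. pose proof (sol_pos _ _ _ _ _ _ _ Hf y ltac:(lra)).
    rewrite ext0_eq, Rabs_right by lra. apply (sol_le_init _ _ _ _ _ _ _ Hf Hd). lra. }
  set (H := Rmax hi 1). assert (HH : 1 <= H) by apply Rmax_r.
  destruct (Heine (ext0 f) (fun y => 0 <= y <= b) (compact_P3 0 b)
              (fun y Hy => sol_ext0_continuous _ _ _ _ _ _ _ Hf y ltac:(lra))
              (mkposreal (e / (2 * H)) ltac:(apply Rdiv_lt_0_compat; lra))) as [d Hfd].
  destruct (rescale_coef_mul_unif lo hi ltac:(lra) d (cond_pos d)) as [r1 [Hr1 Hsx]].
  exists (Rmin r1 (e / (2 * (A + 1)))). split.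
  { apply Rmin_pos; [exact Hr1|apply Rdiv_lt_0_compat; lra]. }
  intros v v' Hv Hv' Hvv x Hx.
  pose proof (Rmin_l r1 (e / (2 * (A + 1)))). pose proof (Rmin_r r1 (e / (2 * (A + 1)))).
  pose proof (rescale_coef_mul_in v x ltac:(lra) Hx).
  pose proof (rescale_coef_mul_in v' x ltac:(lra) Hx).
  specialize (Hsx v v' Hv Hv' ltac:(lra) x Hx).
  set (y := rescale_coef m v * x) in *. set (y' := rescale_coef m v' * x) in *.
  assert (Hf12 : Rabs (ext0 f y - ext0 f y') < e / (2 * H)) by (apply Hfd; lra).
  unfold rescale. fold y y'.
  replace (v * ext0 f y - v' * ext0 f y') with
    ((v - v') * ext0 f y + v' * (ext0 f y - ext0 f y')) by ring.
  eapply Rle_lt_trans; [apply Rabs_triang|]. rewrite !Rabs_mult, (Rabs_right v') by lra.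
  assert (Hv'H : v' <= H) by (eapply Rle_trans; [|apply Rmax_l]; lra).
  assert (T1 : Rabs (v - v') * Rabs (ext0 f y) <= e / (2 * (A + 1)) * A)
    by (apply Rmult_le_compat; try apply Rabs_pos; try apply Hfb; lra).
  assert (T2 : v' * Rabs (ext0 f y - ext0 f y') <= H * (e / (2 * H)))
    by (apply Rmult_le_compat; try apply Rabs_pos; lra).
  assert (e / (2 * (A + 1)) * A < e / 2).
  { apply (Rmult_lt_reg_l (2 * (A + 1))); [lra|]. field_simplify; nra. }
  assert (H * (e / (2 * H)) = e / 2) by (field; lra).
  lra.
Qed.

End Family.

Lemma rescale_touches (N : nat) m sigma p A1 A2 X b (f1 f2 : R -> R) :
  1 < m -> 0 < A1 -> A1 < A2 -> 0 < b < X ->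
  is_sol_on N m sigma p A1 f1 X -> is_sol_on N m sigma p A2 f2 X ->
  (forall x, 0 < x < X -> Derive f1 x < 0) -> (forall x, 0 < x < X -> Derive f2 x < 0) ->
  exists nu, A2 / A1 <= nu /\ (forall x, 0 <= x <= b -> f2 x <= rescale m nu f1 x) /\
    exists c, 0 <= c <= b /\ rescale m nu f1 c = f2 c.
Proof.
  intros Hm HA1 HA12 Hb Hf1 Hf2 Hd1 Hd2.
  set (lam := A2 / A1). set (hi := A2 / f1 b + 1).
  assert (Hlam : 1 < lam) by (unfold lam; apply (Rmult_lt_reg_r A1); [lra|]; field_simplify; lra).
  assert (Hf1b : 0 < f1 b < A1).
  { split; [apply (sol_pos _ _ _ _ _ _ _ Hf1)|apply (sol_lt_init _ _ _ _ _ _ _ Hf1 Hd1)]; lra. }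
  assert (Hhi : lam < hi).
  { unfold hi, lam. assert (A2 / A1 < A2 / f1 b); [|lra].
    apply Rmult_lt_compat_l; [lra|]. apply Rinv_lt_contravar; nra. }
  destruct (sliding (fun v => rescale m v (ext0 f1)) (ext0 f2) lam hi 0 b)
    as [nu [Hnu [Hle [c [Hc Htouch]]]]]; try lra.
  - intros v v' x Hv _ Hx. apply (rescale_ext0_mono N m sigma p A1 X b f1); auto; lra.
  - apply (rescale_ext0_unif N m sigma p A1 X b f1); auto; lra.
  - intros v x Hv Hx. apply continuity_pt_minus.
    + apply (rescale_ext0_continuous N m sigma p A1 X b f1); auto; lra.
    + apply (sol_ext0_continuous _ _ _ _ _ _ _ Hf2). lra.
  - exists 0. split; [lra|]. unfold rescale. rewrite Rmult_0_r, !ext0_eq by lra.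
    rewrite (sol_init _ _ _ _ _ _ _ Hf1), (sol_init _ _ _ _ _ _ _ Hf2).
    unfold lam. right. field. lra.
  - intros x Hx. rewrite rescale_ext0_eq, ext0_eq by lra. unfold rescale.
    pose proof (rescale_coef_mul_in m b Hm hi x ltac:(lra) Hx).
    assert (f1 b <= f1 (rescale_coef m hi * x))
      by (apply (sol_nonincreasing _ _ _ _ _ _ _ Hf1 Hd1); lra).
    assert (A2 < hi * f1 b) by (unfold hi; rewrite Rmult_plus_distr_r; field_simplify; lra).
    assert (f2 x <= A2) by (apply (sol_le_init _ _ _ _ _ _ _ Hf2 Hd2); lra).
    nra.
  - exists nu. split; [lra|]. split.
    + intros x Hx. specialize (Hle x Hx). rewrite rescale_ext0_eq, ext0_eq in Hle by lra. exact Hle.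
    + exists c. split; [exact Hc|]. rewrite rescale_ext0_eq, ext0_eq in Htouch by lra. exact Htouch.
Qed.

Lemma rescale_regular (N : nat) m sigma p A X b nu (f : R -> R) x :
  1 < m -> 1 < nu -> b <= X -> is_sol_on N m sigma p A f X -> 0 < x < b ->
  regular_at m (rescale m nu f) x.
Proof.
  intros Hm Hnu HbX Hf Hx. pose proof (rescale_coef_pos m nu).
  pose proof (rescale_coef_lt_1 m nu Hm Hnu).
  apply (regular_at_scaled N m sigma p A X nu (rescale_coef m nu) f Hf); nra.
Qed.

Lemma rescale_gt_sol (N : nat) m sigma p A X nu (f : R -> R) x :
  1 < m -> 1 < nu -> is_sol_on N m sigma p A f X ->
  (forall x, 0 < x < X -> Derive f x < 0) -> 0 < x < X -> f x < rescale m nu f x.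
Proof.
  intros Hm Hnu Hf Hd Hx. pose proof (rescale_coef_pos m nu). pose proof (rescale_coef_lt_1 m nu Hm Hnu).
  assert (f x <= f (rescale_coef m nu * x)) by (apply (sol_nonincreasing _ _ _ _ _ _ _ Hf Hd); nra).
  pose proof (sol_pos _ _ _ _ _ _ _ Hf x ltac:(lra)).
  unfold rescale. nra.
Qed.

Lemma rescale_not_touching_inside (N : nat) m sigma p A1 A2 X b nu (f1 f2 : R -> R) c :
  std_params N m sigma p -> 1 < nu -> b <= X ->
  is_sol_on N m sigma p A1 f1 X -> is_sol_on N m sigma p A2 f2 X ->
  (forall x, 0 < x < b -> f2 x <= rescale m nu f1 x) ->
  0 < c < b -> rescale m nu f1 c <> f2 c.
Proof.
  intros Hpar Hnu HbX Hf1 Hf2 Hle Hc Htouch. pose proof Hpar as [_ [Hm _]].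
  assert (Hcmp := ode_residual_le_at_touching N m sigma p f2 (rescale m nu f1) 0 b c
                    ltac:(lra) Hc).
  rewrite (sol_residual _ _ _ _ _ _ _ Hf2 c) in Hcmp by lra.
  assert (Hneg : ode_residual N m sigma p (rescale m nu f1) c < 0).
  { apply (ode_residual_rescale_neg N m sigma p A1 f1 X nu c Hpar Hf1 Hnu); [lra|].
    pose proof (rescale_coef_pos m nu). pose proof (rescale_coef_lt_1 m nu Hm Hnu). nra. }
  enough (0 <= ode_residual N m sigma p (rescale m nu f1) c) by lra.
  apply Hcmp; [|exact Htouch| |].
  - intros x Hx. split; [apply (sol_pos _ _ _ _ _ _ _ Hf2); lra|apply Hle, Hx].
  - intros x Hx. apply (sol_regular _ _ _ _ _ _ _ Hf2). lra.
  - intros x Hx. apply (rescale_regular N m sigma p A1 X b); assumption.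
Qed.

Theorem lemma4p3 (N : nat) (m sigma p A1 A2 Xi : R) (f1 f2 : R -> R) :
  std_params N m sigma p ->
  0 < A1 -> A1 < A2 -> 0 < Xi ->
  is_sol_on N m sigma p A1 f1 Xi ->
  is_sol_on N m sigma p A2 f2 Xi ->
  (forall xi, 0 < xi < Xi ->
     0 < f1 xi /\ Derive f1 xi < 0 /\ Derive f2 xi < 0) ->
  forall xi, 0 < xi < Xi -> f1 xi < f2 xi.
Proof.
  intros Hpar HA1 HA12 _ Hf1 Hf2 Hsign b Hb.
  assert (Hd1 : forall x, 0 < x < Xi -> Derive f1 x < 0) by (intros x Hx; apply Hsign, Hx).
  assert (Hd2 : forall x, 0 < x < Xi -> Derive f2 x < 0) by (intros x Hx; apply Hsign, Hx).
  destruct (Rlt_or_le (f1 b) (f2 b)) as [|Hb12]; [assumption|exfalso].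
  pose proof Hpar as [HN [Hm _]].
  assert (Hlam : 1 < A2 / A1) by (apply (Rmult_lt_reg_r A1); [lra|]; field_simplify; lra).
  destruct (rescale_touches N m sigma p A1 A2 Xi b f1 f2 Hm HA1 HA12 Hb Hf1 Hf2 Hd1 Hd2)
    as [nu [Hnu [Hle [c [Hc Htouch]]]]].
  destruct (Req_dec c 0) as [->|Hc0]; [|destruct (Req_dec c b) as [->|Hcb]].
  - assert (nu = A2 / A1) as ->.
    { unfold rescale in Htouch. rewrite Rmult_0_r, (sol_init _ _ _ _ _ _ _ Hf1),
        (sol_init _ _ _ _ _ _ _ Hf2) in Htouch.
      rewrite <- Htouch. field. lra. }
    destruct N as [|n]; [lia|].
    apply (rescale_same_init_not_above n m sigma p A1 A2 Xi b f1 f2); auto.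
    intros t Ht. apply Hle. lra.
  - pose proof (rescale_gt_sol N m sigma p A1 Xi nu f1 b Hm ltac:(lra) Hf1 Hd1 Hb). lra.
  - apply (rescale_not_touching_inside N m sigma p A1 A2 Xi b nu f1 f2 c); try lra; auto.
    intros x Hx. apply Hle. lra.
Qed.
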